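(* Let $h\ge1$ and $m\ge1$ be integers. (a) Let $G$ be a finite Abelian group of order $v$ and $B=\{0,b_1,\dots,b_m\}\subseteq G$ a $B_h$ set (of cardinality $m+1$) that generates $G$. Then $\Lambda=\{\mathbf x\in\mathbb Z^m:\sum_{i=1}^m x_ib_i=0\}$ is a sublattice of $\mathbb Z^m$ with $d_a(\mathbf x,\mathbf y)>h$ for all distinct $\mathbf x,\mathbf y\in\Lambda$, and its density is $\mu(\Lambda)=1/v$. (b) Conversely, if $\Lambda'\subseteq\mathbb Z^m$ is a sublattice with $d_a(\mathbf x,\mathbf y)>h$ for all distinct $\mathbf x,\mathbf y\in\Lambda'$, then the quotient group $G=\mathbb Z^m/\Lambda'$ contains a $B_h$ set of cardinality $m+1$ that generates $G$.
   Context: A sublattice of $\mathbb Z^m$ is a subgroup of $(\mathbb Z^m,+)$. $d_a(\mathbf x,\mathbf y)=\max\{\sum_{i:x_i>y_i}(x_i-y_i),\sum_{i:x_i<y_i}(y_i-x_i)\}$. For an Abelian group $G$ (written additively), a set $B=\{b_0,\dots,b_m\}\subseteq G$ of $m+1$ elements is a $B_h$ set if the sums $b_{i_1}+\dots+b_{i_h}$, $0\le i_1\le\dots\le i_h\le m$, are pairwise different (for different index tuples). For $x_i\in\mathbb Z$, $x_ib_i$ denotes the $|x_i|$-fold sum of $b_i$ if $x_i\ge0$ and of $-b_i$ if $x_i<0$. The density of a lattice $\Lambda$ is $\mu(\Lambda)=\lim_{k\to\infty}|\Lambda\cap\{-k,\dots,k\}^m|/(2k+1)^m$. *)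

From HB Require Import structures.
From mathcomp Require Import all_boot all_order all_algebra.
Set Implicit Arguments. Unset Strict Implicit. Unset Printing Implicit Defensive.
Import Order.TTheory GRing.Theory Num.Theory.
Local Open Scope ring_scope.

Notation Zvec m := {ffun 'I_m -> int}.

Definition sublattice (m : nat) (L : Zvec m -> Prop) : Prop :=
  L 0 /\ (forall x y, L x -> L y -> L (x + y)) /\ (forall x, L x -> L (- x)).

Definition d_a (m : nat) (x y : Zvec m) : int :=
  Num.max (\sum_(i < m | y i < x i) (x i - y i))
          (\sum_(i < m | x i < y i) (y i - x i)).

Definition Bh_set (G : zmodType) (n h : nat) (b : 'I_n -> G) : Prop :=
  forall s t : h.-tuple 'I_n,
    sorted (fun i j : 'I_n => (i <= j)%N) s ->
    sorted (fun i j : 'I_n => (i <= j)%N) t ->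
    \sum_(i <- s) b i = \sum_(i <- t) b i -> s = t.

Definition generates (G : zmodType) (n : nat) (b : 'I_n -> G) : Prop :=
  forall g : G, exists c : 'I_n -> int, g = \sum_(i < n) b i *~ c i.

(* B = {0, b_1, ..., b_m}, indexed by 'I_m.+1 with b_0 = 0. *)
Definition extB (G : zmodType) (m : nat) (b : 'I_m -> G) : 'I_m.+1 -> G :=
  fun i => if unlift ord0 i is Some j then b j else 0.

Definition box_count (m : nat) (L : pred (Zvec m)) (k : nat) : nat :=
  #|[set x : {ffun 'I_m -> 'I_(2 * k + 1)} |
      L [ffun i => (nat_of_ord (x i))%:Z - k%:Z]]|.

Definition has_density (m : nat) (L : pred (Zvec m)) (d : rat) : Prop :=
  forall eps : rat, 0 < eps -> exists K : nat, forall k : nat, (K <= k)%N ->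
    `| (box_count L k)%:R / ((2 * k + 1) ^ m)%:R - d | < eps.

(* A sum of [h] elements of [{0, b_1, ..., b_m}] is a combination
   [\sum_i c_i b_i] with [c : 'I_m -> nat] of total weight at most [h], the
   copies of [b_0 = 0] filling up the rest; so the set is a B_h set iff these
   combinations are injective on weights [<= h].  If [x <> y] have the same
   [b]-combination, the positive and negative parts of [x - y] are two such
   weight vectors of weights at most [d_a x y]; conversely two weight vectors
   of weight [<= h] are at [d_a]-distance [<= h].
   For the density, [Lam] is the kernel of the surjection [x |-> \sum_i x_i b_i]
   onto [G]: each of the [#|G|] fibres is a translate of [Lam] by a bounded
   vector, so its count in the box of radius [k] lies between the counts of
   [Lam] in the boxes of radii [k - C] and [k + C], and the fibre counts add
   up to [(2k+1)^m]. *)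

From HB Require Import structures.
From mathcomp Require Import all_boot all_order all_algebra.
From mathcomp Require Import zify ring lra.
Import Order.TTheory GRing.Theory Num.Theory.
Local Open Scope ring_scope.
Set Implicit Arguments. Unset Strict Implicit.

Local Notation ordle := (fun i j : 'I__ => (i <= j)%N).

Section ExtendedSet.
Variables (G : zmodType) (m : nat) (b : 'I_m -> G).

Lemma extB0 : extB b ord0 = 0.
Proof. by rewrite /extB unlift_none. Qed.

Lemma extB_lift i : extB b (lift ord0 i) = b i.
Proof. by rewrite /extB liftK. Qed.

Lemma sum_extB (s : seq 'I_m.+1) :
  \sum_(j <- s) extB b j = \sum_(i < m) b i *+ count_mem (lift ord0 i) s.
Proof.
elim: s => [|x s IH]; first by rewrite big_nil big1 // => i _.
rewrite big_cons IH /=.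
under [RHS]eq_bigr do rewrite mulrnDr.
rewrite big_split /=; congr (_ + _).
case: (unliftP ord0 x) => [j ->|->]; last first.
  by rewrite extB0 big1 // => i _; rewrite eq_sym (negbTE (neq_lift _ _)).
under eq_bigr do rewrite (inj_eq lift_inj) eq_sym mulrb.
by rewrite -big_mkcond big_pred1_eq extB_lift.
Qed.

End ExtendedSet.

Lemma size_count_lift (m : nat) (s : seq 'I_m.+1) :
  size s = (count_mem ord0 s + \sum_(i < m) count_mem (lift ord0 i) s)%N.
Proof.
elim: s => [|x s IH]; first by rewrite big1.
rewrite /= IH big_split /=.
case: (unliftP ord0 x) => [j ->|->].
  have -> : (\sum_(i < m) (lift ord0 j == lift ord0 i))%N = 1%N.
    rewrite (bigD1 j) //= eqxx big1 // => i /negbTE ij.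
    by rewrite (inj_eq lift_inj) eq_sym ij.
  rewrite [lift _ _ == _]eq_sym (negbTE (neq_lift _ _)); lia.
have -> : (\sum_(i < m) (ord0 == lift ord0 i :> 'I_m.+1))%N = 0%N.
  by rewrite big1 // => i _; rewrite (negbTE (neq_lift _ _)).
rewrite eqxx; lia.
Qed.

(* The count of [ord0] is forced by the size [h]. *)
Lemma sorted_tuple_count_inj (h m : nat) (s t : h.-tuple 'I_m.+1) :
  sorted ordle s -> sorted ordle t ->
  (forall i : 'I_m, count_mem (lift ord0 i) s = count_mem (lift ord0 i) t) ->
  s = t.
Proof.
move=> ss st Est; apply: val_inj; apply: (sorted_eq (leT := ordle)) => //.
- by move=> x y z; apply: leq_trans.
- by move=> x y /anti_leq/val_inj.
apply/allP => x _; apply/eqP.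
case: (unliftP ord0 x) => [j ->|->]; first exact: Est.
move: (size_count_lift s) (size_count_lift t); rewrite !size_tuple.
under eq_bigr do rewrite Est.
by move=> Hs Ht; apply/eqP; rewrite -(eqn_add2r (\sum_(i < m) count_mem (lift ord0 i) t)) -Hs -Ht.
Qed.

Definition padded_seq (h m : nat) (c : 'I_m -> nat) : seq 'I_m.+1 :=
  nseq (h - \sum_i c i) ord0 ++
  flatten [seq nseq (c i) (lift ord0 i) | i <- index_enum 'I_m].

Lemma count_padded_seq (h m : nat) (c : 'I_m -> nat) j :
  count_mem (lift ord0 j) (padded_seq h c) = c j.
Proof.
rewrite /padded_seq count_cat count_nseq /= mul0n add0n.
rewrite count_flatten sumnE !big_map (bigD1 j) //= count_nseq /= eqxx mul1n.
rewrite big1 ?addn0 // => i /negbTE ij.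
by rewrite count_nseq /= (inj_eq lift_inj) ij mul0n.
Qed.

Lemma size_padded_seq (h m : nat) (c : 'I_m -> nat) :
  (\sum_i c i <= h)%N -> size (padded_seq h c) = h.
Proof.
move=> hc; rewrite size_cat size_nseq size_flatten /shape -map_comp sumnE big_map.
rewrite (eq_bigr c) => [|i _]; [exact: subnK | exact: size_nseq].
Qed.

Lemma sorted_tuple_of_counts (h m : nat) (c : 'I_m -> nat) :
  (\sum_i c i <= h)%N ->
  exists2 s : h.-tuple 'I_m.+1, sorted ordle s &
    forall i, count_mem (lift ord0 i) s = c i.
Proof.
move=> hc; have size_s : size (sort ordle (padded_seq h c)) == h.
  by rewrite size_sort size_padded_seq.
exists (Tuple size_s); first by apply: sort_sorted => i j; exact: leq_total.
by move=> i; rewrite (permP (permEl (perm_sort _ _))) count_padded_seq.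
Qed.

Section BhSet.
Variables (G : zmodType) (h m : nat) (b : 'I_m -> G).

Lemma Bh_set_extBP :
  Bh_set h (extB b) <->
  (forall p q : 'I_m -> nat, (\sum_i p i <= h)%N -> (\sum_i q i <= h)%N ->
     \sum_i b i *+ p i = \sum_i b i *+ q i -> p =1 q).
Proof.
split=> [Bh p q hp hq Epq i | Bh s t ss st Est].
  have [s ss cnt_s] := sorted_tuple_of_counts hp.
  have [t st cnt_t] := sorted_tuple_of_counts hq.
  have Est : s = t.
    apply: Bh; rewrite // !sum_extB.
    by under eq_bigr do rewrite cnt_s; under [RHS]eq_bigr do rewrite cnt_t.
  by rewrite -cnt_s -cnt_t Est.
have sum_count_le (u : h.-tuple 'I_m.+1) :
    (\sum_i count_mem (lift ord0 i) u <= h)%N.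
  by rewrite -[X in (_ <= X)%N](size_tuple u) size_count_lift leq_addl.
by apply: sorted_tuple_count_inj => //; apply: Bh; rewrite -?sum_extB.
Qed.

Lemma sum_delta_mulrn (a : 'I_m) : \sum_i b i *+ (i == a) = b a.
Proof. by under eq_bigr do rewrite mulrb; rewrite -big_mkcond big_pred1_eq. Qed.

Lemma Bh_set_extB_inj : (1 <= h)%N -> Bh_set h (extB b) -> injective (extB b).
Proof.
move=> h_gt0 /Bh_set_extBP Bh.
have sum_delta (a : 'I_m) : (\sum_i (i == a) <= h)%N
  by rewrite (bigD1 a) //= eqxx big1 => [|i /negbTE ->].
have sum_zero : (\sum_(i < m) 0 <= h)%N by rewrite big1.
have sum_b_zero : \sum_i b i *+ 0 = 0 by rewrite big1 // => i _; exact: mulr0n.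
move=> i j; case: (unliftP ord0 i) => [a ->|->]; case: (unliftP ord0 j) => [a' ->|->];
  rewrite ?extB_lift ?extB0 // => Ebb.
- have E : \sum_k b k *+ (k == a) = \sum_k b k *+ (k == a').
    by rewrite !sum_delta_mulrn.
  by move: (Bh _ _ (sum_delta a) (sum_delta a') E a) => /=; rewrite eqxx; case: eqP => [->|].
- have E : \sum_k b k *+ (k == a) = \sum_k b k *+ 0 by rewrite sum_delta_mulrn sum_b_zero.
  by move: (Bh _ _ (sum_delta a) sum_zero E a) => /=; rewrite eqxx.
- have E : \sum_k b k *+ 0 = \sum_k b k *+ (k == a') by rewrite sum_delta_mulrn sum_b_zero.
  by move: (Bh _ _ sum_zero (sum_delta a') E a') => /=; rewrite eqxx.
Qed.

End BhSet.

Section LinearCombination.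
Variables (G : zmodType) (m : nat).

Definition lincomb (b : 'I_m -> G) (x : Zvec m) : G := \sum_(i < m) b i *~ x i.

Lemma lincomb_is_nmod_morphism b : nmod_morphism (lincomb b).
Proof.
split=> [|x y]; first by rewrite /lincomb big1 // => i _; rewrite ffunE mulr0z.
by rewrite /lincomb -big_split; apply: eq_bigr => i _; rewrite ffunE mulrzDr.
Qed.

HB.instance Definition _ b :=
  GRing.isNmodMorphism.Build (Zvec m) G (lincomb b) (lincomb_is_nmod_morphism b).

Definition unitv (i : 'I_m) : Zvec m := [ffun j => (i == j)%:R].

Lemma unitv_decomp (x : Zvec m) : x = \sum_(i < m) unitv i *~ x i.
Proof.
apply/ffunP => j; rewrite sum_ffunE (bigD1 j) //= big1 ?addr0 => [|i /negbTE ij].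
  by rewrite ffunMzE ffunE eqxx intz.
by rewrite ffunMzE ffunE ij mul0rz.
Qed.

Lemma additive_lincomb_unitv (f : {additive Zvec m -> G}) (x : Zvec m) :
  f x = lincomb (f \o unitv) x.
Proof.
rewrite {1}(unitv_decomp x) raddf_sum; apply: eq_bigr => i _; exact: raddfMz.
Qed.

Definition natv (c : 'I_m -> nat) : Zvec m := [ffun i => (c i)%:Z].

Lemma lincomb_natv b c : lincomb b (natv c) = \sum_i b i *+ c i.
Proof. by apply: eq_bigr => i _; rewrite ffunE pmulrn. Qed.

Lemma generates_extBP (b : 'I_m -> G) :
  generates (extB b) <-> forall g, exists x, lincomb b x = g.
Proof.
split=> [gen g | surj g].
  have [c ->] := gen g; exists [ffun i => c (lift ord0 i)].
  rewrite big_ord_recl extB0 mul0rz add0r.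
  by apply: eq_bigr => i _; rewrite ffunE extB_lift.
have [x <-] := surj g; exists (fun j => if unlift ord0 j is Some i then x i else 0).
rewrite big_ord_recl extB0 mul0rz add0r.
by apply: eq_bigr => i _; rewrite liftK extB_lift.
Qed.

End LinearCombination.

Arguments unitv {m} i.

Lemma sublattice_kernel (G : zmodType) (m : nat) (f : {additive Zvec m -> G}) :
  sublattice (fun x => f x == 0).
Proof.
split; [|split] => [|x y /eqP fx /eqP fy|x /eqP fx]; apply/eqP.
- exact: raddf0.
- by rewrite raddfD fx fy addr0.
- by rewrite raddfN fx oppr0.
Qed.

Definition pospart (z : int) : nat := if z is Posz n then n else 0%N.

Lemma pospart_subN (z : int) : (pospart z)%:Z - (pospart (- z))%:Z = z.
Proof. by case: z => [[|n]|n] //=; rewrite ?subr0 ?NegzE ?sub0r. Qed.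

Lemma d_a_pospart (m : nat) (x y : Zvec m) :
  d_a x y = Num.max (\sum_i pospart (x i - y i))%N%:Z
                    (\sum_i pospart (y i - x i))%N%:Z.
Proof.
rewrite /d_a !(big_morph Posz PoszD (erefl 0%:Z)).
congr Num.max; rewrite big_mkcond; apply: eq_bigr => i _; rewrite -subr_gt0;
  by case: (_ - _) => [[|n]|n].
Qed.

Lemma d_a_subr (m : nat) (x y : Zvec m) : d_a (x - y) 0 = d_a x y.
Proof.
by rewrite !d_a_pospart; congr (Num.max (Posz _) (Posz _)); apply: eq_bigr => i _;
  rewrite !ffunE ?subr0 ?sub0r ?opprB.
Qed.

Lemma d_a_natv_le (m h : nat) (p q : 'I_m -> nat) :
  (\sum_i p i <= h)%N -> (\sum_i q i <= h)%N -> d_a (natv p) (natv q) <= h%:Z.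
Proof.
have sum_le (r s : 'I_m -> nat) (P : pred 'I_m) :
    \sum_(i | P i) (natv r i - natv s i) <= (\sum_i r i)%N%:Z.
  rewrite (big_morph Posz PoszD (erefl 0%:Z)) [leRHS](bigID P) /= -[leLHS]addr0.
  apply: lerD; last exact: sumr_ge0.
  by apply: ler_sum => i _; rewrite !ffunE lerBlDr lerDl.
move=> hp hq; rewrite /d_a ge_max.
by rewrite (le_trans (sum_le p q _)) ?(le_trans (sum_le q p _)) ?lez_nat.
Qed.

Section KernelDistance.
Variables (G : zmodType) (h m : nat) (b : 'I_m -> G).

Lemma Bh_set_lincomb_d_a (x y : Zvec m) :
  Bh_set h (extB b) -> lincomb b x = lincomb b y -> x != y -> h%:Z < d_a x y.
Proof.
move=> /Bh_set_extBP Bh Exy; apply: contraR; rewrite -leNgt d_a_pospart ge_max !lez_nat.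
set p := fun i => pospart (x i - y i); set q := fun i => pospart (y i - x i).
move=> /andP [hp hq].
have natv_pq : natv p - natv q = x - y.
  by apply/ffunP => i; rewrite !ffunE /p /q -(opprB (x i)) pospart_subN.
have Epq : \sum_i b i *+ p i = \sum_i b i *+ q i.
  apply/eqP; rewrite -!lincomb_natv -subr_eq0.
  by move: (congr1 (lincomb b) natv_pq); rewrite !raddfB /= Exy subrr => ->.
apply/eqP/ffunP => i; apply/eqP; rewrite -subr_eq0.
move: (congr1 (fun z : Zvec m => z i) natv_pq).
by rewrite !ffunE /= (Bh p q hp hq Epq i) subrr => <-.
Qed.

End KernelDistance.

Section QuotientBhSet.
Variables (G : zmodType) (h m : nat) (L : Zvec m -> Prop).
Variable f : {additive Zvec m -> G}.
Hypothesis L_d_a : forall x y, L x -> L y -> x != y -> h%:Z < d_a x y.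
Hypothesis kerf : forall x, f x = 0 <-> L x.

Lemma quotient_d_a x y : f x = f y -> x != y -> h%:Z < d_a x y.
Proof.
move=> Exy ne; rewrite -d_a_subr; apply: L_d_a; rewrite ?subr_eq0 //.
- by apply/kerf; rewrite raddfB Exy subrr.
- by apply/kerf; rewrite raddf0.
Qed.

Lemma quotient_Bh_set : Bh_set h (extB (f \o unitv)).
Proof.
apply/Bh_set_extBP => p q hp hq Epq.
have /eqP natv_pq : natv p == natv q.
  apply: contraTT (d_a_natv_le hp hq); rewrite -ltNge; apply: quotient_d_a.
  by rewrite !(additive_lincomb_unitv f) !lincomb_natv.
by move=> i; move: (congr1 (fun z : Zvec m => z i) natv_pq); rewrite !ffunE => -[].
Qed.

Lemma quotient_generates :
  (forall g, exists x, f x = g) -> generates (extB (f \o unitv)).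
Proof.
move=> surj; apply/generates_extBP => g; have [x <-] := surj g.
by exists x; rewrite (additive_lincomb_unitv f).
Qed.

End QuotientBhSet.

Lemma leq_expnD_linear (b d n : nat) :
  ((b + d) ^ n.+1 <= b ^ n.+1 + n.+1 * d * (b + d) ^ n)%N.
Proof.
elim: n => [|n IH]; first by rewrite !expn1 expn0 muln1 mul1n.
rewrite (expnS b n.+1) (expnS (b + d) n.+1).
set A := ((b + d) ^ n.+1)%N; set Bn := (b ^ n.+1)%N.
have h1 : (b * A <= b * Bn + n.+1 * d * (b * (b + d) ^ n))%N.
  by have := leq_mul (leqnn b) IH; rewrite -/A -/Bn; lia.
have h2 : (b * (b + d) ^ n <= A)%N by rewrite /A expnS leq_mul2r leq_addr orbT.
have h3 : (n.+1 * d * (b * (b + d) ^ n) <= n.+1 * d * A)%N by rewrite leq_mul2l h2 orbT.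
lia.
Qed.

Lemma leq_expn2r (x y e : nat) : (x <= y)%N -> (x ^ e <= y ^ e)%N.
Proof. by move=> xy; elim: e => // e IH; rewrite !expnS leq_mul. Qed.

Lemma box_size_bounds (m k C : nat) : (C <= k)%N ->
  let N := (2 * k + 1)%N in let D := (m.+1 * (2 * C) * 2 ^ m)%N in
  ((2 * (k + C) + 1) ^ m.+1 <= N ^ m.+1 + D * N ^ m)%N /\
  (N ^ m.+1 <= (2 * (k - C) + 1) ^ m.+1 + D * N ^ m)%N.
Proof.
move=> kC N D.
have eD Q : (D * Q = m.+1 * (2 * C) * (2 ^ m * Q))%N by rewrite /D !mulnA.
split.
- have := leq_expnD_linear N (2 * C) m.
  have -> : (N + 2 * C = 2 * (k + C) + 1)%N by rewrite /N; lia.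
  have : ((2 * (k + C) + 1) ^ m <= 2 ^ m * N ^ m)%N.
    by rewrite -expnMn leq_expn2r // /N; lia.
  move=> /(leq_mul (leqnn (m.+1 * (2 * C)))); rewrite eD; lia.
- have := leq_expnD_linear (2 * (k - C) + 1) (2 * C) m.
  have -> : (2 * (k - C) + 1 + 2 * C = N)%N by rewrite /N; lia.
  have : (N ^ m <= 2 ^ m * N ^ m)%N by rewrite leq_pmull // expn_gt0.
  move=> /(leq_mul (leqnn (m.+1 * (2 * C)))); rewrite eD; lia.
Qed.

Lemma inv_approx (R : realFieldType) (a F n W D eps : R) :
  1 <= a -> 0 < n -> 0 < W -> 0 < eps ->
  a * F <= n * W + D * W -> n * W <= a * F + D * W -> D < eps * n ->
  `|F / (n * W) - a^-1| < eps.
Proof.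
move=> a_ge1 n_gt0 W_gt0 eps_gt0 up lo D_lt.
have a_gt0 : 0 < a by apply: lt_le_trans a_ge1.
have DW : D * W < eps * n * W by rewrite ltr_pM2r.
have epsW : eps * n * W <= eps * n * W * a by rewrite ler_peMr // ltW // !mulr_gt0.
have -> : F / (n * W) - a^-1 = (a * F - n * W) / (a * (n * W)).
  by field; apply/and3P; split; rewrite gt_eqF.
have anW : 0 < a * (n * W) by rewrite !mulr_gt0.
rewrite ltr_norml ltr_pdivrMr // ltr_pdivlMr //; apply/andP; split; nra.
Qed.

Lemma has_density_of_squeeze (m v C : nat) (L : pred (Zvec m)) :
  (0 < v)%N -> (0 < m)%N ->
  (forall k, (C <= k)%N -> ((2 * (k - C) + 1) ^ m <= v * box_count L k)%N /\
                           (v * box_count L k <= (2 * (k + C) + 1) ^ m)%N) ->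
  has_density L (v%:R)^-1.
Proof.
case: m L => [//|m] L v_gt0 _ squeeze eps eps_gt0.
pose D := (m.+1 * (2 * C) * 2 ^ m)%N.
have D_eps_ge0 : 0 <= D%:R / eps by rewrite divr_ge0 // ltW.
exists (maxn C (Num.bound (D%:R / eps))) => k; rewrite geq_max => /andP [kC kB].
have [lo hi] := squeeze k kC; have [up lw] := box_size_bounds m kC.
set N := (2 * k + 1)%N in up lw *.
rewrite natrX exprS; apply: (inv_approx (D := D%:R)) => //.
- by rewrite ler1n.
- by rewrite ltr0n /N addn1.
- by rewrite exprn_gt0 // ltr0n /N addn1.
- by rewrite -!natrX -!natrM -natrD ler_nat -expnS (leq_trans hi).
- by rewrite -!natrX -!natrM -natrD ler_nat -expnS (leq_trans lw) // leq_add2r.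
rewrite -ltr_pdivrMl // mulrC; apply: (lt_le_trans (archi_boundP D_eps_ge0)).
by rewrite ler_nat /N; lia.
Qed.

Lemma box_count_shift (m k c : nat) (y : Zvec m) (P Q : pred (Zvec m)) :
  (forall i, `|y i| <= c%:Z) -> (forall z, P z -> Q (z + y)) ->
  (box_count P k <= box_count Q (k + c))%N.
Proof.
move=> y_le PQ.
have shift_ge0 (j : 'I_(2 * k + 1)) i : 0 <= (j : nat)%:Z + c%:Z + y i.
  by have := y_le i; rewrite ler_norml => /andP [? ?]; lia.
have shift_lt (j : 'I_(2 * k + 1)) i :
    (absz ((j : nat)%:Z + c%:Z + y i)%R < 2 * (k + c) + 1)%N.
  by have := ltn_ord j; have := y_le i; rewrite ler_norml => /andP [? ?] ?; lia.
pose F (x : {ffun 'I_m -> 'I_(2 * k + 1)}) : {ffun 'I_m -> 'I_(2 * (k + c) + 1)} :=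
  [ffun i => Ordinal (shift_lt (x i) i)].
have F_inj : injective F.
  move=> x1 x2 /ffunP E; apply/ffunP => i; apply: val_inj.
  move: (congr1 (fun j : 'I__ => (j : nat)%:Z) (E i)).
  by rewrite !ffunE /= !abszE !ger0_norm //; lia.
rewrite /box_count -(card_imset _ F_inj); apply: subset_leq_card.
apply/subsetP => _ /imsetP [x + ->]; rewrite !inE => Px.
have -> : [ffun i => (F x i : nat)%:Z - (k + c)%:Z] = [ffun i => (x i : nat)%:Z - k%:Z] + y.
  by apply/ffunP => i; rewrite !ffunE /= abszE ger0_norm //; lia.
exact: PQ.
Qed.

Lemma sum_box_count_fibres (G : finType) (m k : nat) (f : Zvec m -> G) :
  (\sum_(g : G) box_count (fun z => f z == g) k)%N = ((2 * k + 1) ^ m)%N.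
Proof.
have -> : ((2 * k + 1) ^ m)%N = #|{ffun 'I_m -> 'I_(2 * k + 1)}|.
  by rewrite card_ffun !card_ord.
rewrite /box_count -sum1_card.
rewrite (partition_big (fun x : {ffun 'I_m -> 'I_(2 * k + 1)} =>
  f [ffun i => (x i : nat)%:Z - k%:Z]) predT) //=.
by apply: eq_bigr => g _; rewrite -sum1_card; apply: eq_bigl => x; rewrite inE.
Qed.

Lemma kernel_has_density (G : finZmodType) (m : nat) (f : {additive Zvec m -> G}) :
  (0 < m)%N -> (forall g, exists x, f x = g) ->
  has_density (fun x => f x == 0) (#|G|%:R)^-1.
Proof.
move=> m_gt0 surj; have [y fy] := fin_all_exists surj.
pose C := (\max_(g : G) \max_(i < m) absz (y g i))%N.
have y_le g i : `|y g i| <= C%:Z.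
  rewrite -abszE lez_nat; apply: leq_trans (leq_bigmax (F := fun i => absz (y g i)) i) _.
  exact: (leq_bigmax (F := fun g => \max_(i < m) absz (y g i)) g).
have Ny_le g i : `|(- y g) i| <= C%:Z by rewrite ffunE normrN.
apply: (has_density_of_squeeze (C := C)) => //; first by apply/card_gt0P; exists 0.
move=> k kC; split.
- rewrite -(sum_box_count_fibres (k - C) f) -sum_nat_const -{2}(subnK kC).
  apply: leq_sum => g _; apply: box_count_shift (Ny_le g) _ => z /eqP fz.
  by rewrite raddfB fz fy subrr.
- rewrite -(sum_box_count_fibres (k + C) f) -sum_nat_const.
  apply: leq_sum => g _; apply: box_count_shift (y_le g) _ => z /eqP fz.
  by rewrite raddfD fz fy add0r.
Qed.

Unset Implicit Arguments.

Theorem mainTheorem8 (h m : nat) (hh : (1 <= h)%N) (hm : (1 <= m)%N) :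
  (forall (G : finZmodType) (b : 'I_m -> G),
     injective (extB b) -> Bh_set h (extB b) -> generates (extB b) ->
     let Lam : pred (Zvec m) := fun x => \sum_(i < m) b i *~ x i == 0 in
     sublattice (fun x => Lam x)
     /\ (forall x y, Lam x -> Lam y -> x <> y -> h%:Z < d_a x y)
     /\ has_density Lam (#|G|%:R)^-1)
  /\
  (* (b) : G together with a surjective homomorphism phi with kernel L'
     is (up to isomorphism) the quotient group Z^m / L' *)
  (forall (L' : Zvec m -> Prop), sublattice L' ->
     (forall x y, L' x -> L' y -> x <> y -> h%:Z < d_a x y) ->
     forall (G : zmodType) (phi : Zvec m -> G),
       (forall x y, phi (x + y) = phi x + phi y) ->
       (forall g : G, exists x, phi x = g) ->
       (forall x, phi x = 0 <-> L' x) ->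
       exists b : 'I_m.+1 -> G, injective b /\ Bh_set h b /\ generates b).
Proof.
(* Injectivity of [extB b] in (a) follows from the B_h property, and in (b)
   [L'] is a subgroup as the kernel of [phi]. *)
split.
- move=> G b _ Bh gen Lam; split; [|split].
  + exact: (sublattice_kernel (lincomb b)).
  + move=> x y /eqP Lx /eqP Ly /eqP; apply: (Bh_set_lincomb_d_a (b := b)) => //.
    exact: etrans Lx (esym Ly).
  + by apply: (kernel_has_density (f := lincomb b)) => //; apply/generates_extBP.
- move=> L' _ L'_d_a G phi phiD surj kerphi.
  have phi0 : phi 0 = 0 by apply: (addrI (phi 0)); rewrite -phiD !addr0.
  pose f : {additive Zvec m -> G} :=
    HB.pack phi (GRing.isNmodMorphism.Build _ _ phi (phi0, phiD)).
  have f_d_a x y : L' x -> L' y -> x != y -> h%:Z < d_a x y.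
    by move=> Lx Ly /eqP; exact: L'_d_a.
  have Bh := quotient_Bh_set f_d_a (f := f) kerphi.
  exists (extB (f \o unitv)); split; first exact: Bh_set_extB_inj Bh.
  by split; last exact: quotient_generates.
Qed.
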